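(* Every triality of a thick building of type $\mathsf{D}_4$ is capped.
   Context: The Coxeter graph $\mathsf{D}_4$ has central node $2$ joined to nodes $1,3,4$. A triality is an automorphism of the building inducing an order $3$ automorphism of the Coxeter graph (cyclically permuting $1,3,4$). Simplices are opposite if every chamber containing either is opposite some chamber containing the other. $\mathrm{Opp}(\theta)$ is the set of simplices opposite their image; $\mathrm{Type}(\theta)$ is the union of the type sets of simplices in $\mathrm{Opp}(\theta)$; $\theta$ is capped if $\mathrm{Opp}(\theta)$ contains a simplex of type $\mathrm{Type}(\theta)$. *)

(* Buildings of type D4 via the W-metric (Abramenko-Brown,
   Def. 5.1), with W = W(D4) realized concretely as signed permutations of
   {+-e1,..,+-e4} with an even number of sign changes. *)
From mathcomp Require Import all_boot all_order all_fingroup.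
Set Implicit Arguments. Unset Strict Implicit. Unset Printing Implicit Defensive.

(* Ts = {+-e_i}: (i, true) = +e_(i+1), (i, false) = -e_(i+1). *)
Definition Ts := ('I_4 * bool)%type.

Definition e (i : nat) (b : bool) : Ts := (inord i, b).

(* simple reflections, Bourbaki labelling of D4:
   a1 = e1-e2, a2 = e2-e3, a3 = e3-e4, a4 = e3+e4; node 2 is central.
   Node k of the paper is the index k-1 : 'I_4. *)
Definition s1 : {perm Ts} := (tperm (e 0 true) (e 1 true) * tperm (e 0 false) (e 1 false))%g.
Definition s2 : {perm Ts} := (tperm (e 1 true) (e 2 true) * tperm (e 1 false) (e 2 false))%g.
Definition s3 : {perm Ts} := (tperm (e 2 true) (e 3 true) * tperm (e 2 false) (e 3 false))%g.
Definition s4 : {perm Ts} := (tperm (e 2 true) (e 3 false) * tperm (e 2 false) (e 3 true))%g.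

Definition gen (i : 'I_4) : {perm Ts} :=
  match val i with 0 => s1 | 1 => s2 | 2 => s3 | _ => s4 end.

Definition WK (K : {set 'I_4}) : {set {perm Ts}} := <<[set gen i | i in K]>>%g.
Definition WD4 : {set {perm Ts}} := WK setT.

Definition word_prod (s : seq 'I_4) : {perm Ts} := (\prod_(i <- s) gen i)%g.

Definition coxlen (w : {perm Ts}) (n : nat) : Prop :=
  (exists s, size s = n /\ word_prod s = w) /\
  (forall s, word_prod s = w -> n <= size s).

Section Building.
Variable T : Type.
Variable delta : T -> T -> {perm Ts}.

Definition is_building : Prop :=
  [/\ inhabited T,
      (forall C D, delta C D \in WD4),
      (forall C D, delta C D = 1%g <-> C = D),
      (forall C C' D i, delta C' C = gen i ->
          (delta C' D = (gen i * delta C D)%g \/ delta C' D = delta C D) /\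
          (forall n, coxlen (delta C D) n -> coxlen (gen i * delta C D)%g n.+1 ->
              delta C' D = (gen i * delta C D)%g)) &
      (forall C D i, exists C', delta C' C = gen i /\
                                delta C' D = (gen i * delta C D)%g)].

(* thick: every panel contains at least three chambers *)
Definition thick : Prop :=
  forall C i, exists C1 C2, [/\ C1 <> C2, delta C C1 = gen i & delta C C2 = gen i].

Definition opp_ch (C D : T) : Prop :=
  forall w n m, w \in WD4 -> coxlen w n -> coxlen (delta C D) m -> n <= m.

(* chambers containing the simplex of type J determined by chamber C
   (= residue of type S \ J containing C) *)
Definition chambers_of (C : T) (J : {set 'I_4}) (D : T) : Prop :=
  delta C D \in WK (~: J).

Definition opp_simplices (A B : T -> Prop) : Prop :=
  (forall x, A x -> exists y, B y /\ opp_ch x y) /\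
  (forall y, B y -> exists x, A x /\ opp_ch y x).

Variable theta : T -> T.

Definition is_triality (sigma : {perm 'I_4}) : Prop :=
  [/\ bijective theta,
      (forall C D i, delta C D = gen i <-> delta (theta C) (theta D) = gen (sigma i)),
      sigma (inord 1) = inord 1 &
      #[sigma]%g = 3].

Definition in_Opp (C : T) (J : {set 'I_4}) : Prop :=
  opp_simplices (chambers_of C J)
                (fun y => exists x, chambers_of C J x /\ y = theta x).

Definition is_Type_theta (J : {set 'I_4}) : Prop :=
  forall i, i \in J <-> exists C' J', in_Opp C' J' /\ i \in J'.

Definition capped : Prop :=
  exists C J, in_Opp C J /\ is_Type_theta J.
End Building.

From HB Require Import structures.
From mathcomp Require Import all_boot all_order all_fingroup zify.
From Stdlib Require Import Classical.
Set Implicit Arguments. Unset Strict Implicit. Unset Printing Implicit Defensive.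
Local Open Scope group_scope.

(** Write δ(x) for the Weyl distance from a chamber x to its image θx, and w0 = -1 for the
    longest element of W(D4), which is central.
    The type J of a simplex in Opp(θ) is σ-stable: if i ∈ J but σi ∉ J, comparing two
    chambers of the simplex with opposite chambers of its image along galleries inside the
    residues puts s_σi in the parabolic subgroup W_(S∖σi), which is absurd.
    If J contains the central node, the same comparison gives δ(C) ∈ w0 W_134 for a chamber C.
    As W_134 ≅ (Z/2)^3 and σ permutes 1, 3, 4 cyclically, moving C inside panels (thickness
    provides a chamber off the projection) increases the length of δ until δ = w0.
    So either a chamber is in Opp(θ), and the type S caps θ, or every type in Opp(θ) is σ-stable
    and avoids node 2, hence is ∅ or {1,3,4}, and the largest one occurring caps θ.
    The facts needed about W(D4) are checked by computation with signed permutations. *)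

(** * The Weyl group of type D4 *)

(* [o(k-1)] is node [k] of the paper; [o1] is the central node. *)
Definition o0 : 'I_4 := Ordinal (isT : 0 < 4).
Definition o1 : 'I_4 := Ordinal (isT : 1 < 4).
Definition o2 : 'I_4 := Ordinal (isT : 2 < 4).
Definition o3 : 'I_4 := Ordinal (isT : 3 < 4).
Definition letters : seq 'I_4 := [:: o0; o1; o2; o3].

Lemma letter_cases (i : 'I_4) : [\/ i = o0, i = o1, i = o2 | i = o3].
Proof.
by case: i => [[|[|[|[|k]]]] lt_k4] //; [constructor 1|constructor 2|constructor 3|constructor 4];
  apply/val_inj.
Qed.

Lemma mem_letters i : i \in letters.
Proof. by case: (letter_cases i) => ->. Qed.

Lemma eE k b : k < 4 -> e k b = (nth o0 letters k, b).
Proof.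
by case: k => [|[|[|[|k]]]] // _; rewrite /e; congr pair; apply/val_inj; rewrite /= inordK.
Qed.

(* A computable copy of [gen]: [tperm] and [inord] do not reduce under [vm_compute]. *)
Definition swap (a b x : Ts) : Ts := if x == a then b else if x == b then a else x.

Definition gen_fun (i : 'I_4) (x : Ts) : Ts :=
  match val i with
  | 0 => swap (o0, false) (o1, false) (swap (o0, true) (o1, true) x)
  | 1 => swap (o1, false) (o2, false) (swap (o1, true) (o2, true) x)
  | 2 => swap (o2, false) (o3, false) (swap (o2, true) (o3, true) x)
  | _ => swap (o2, false) (o3, true) (swap (o2, true) (o3, false) x)
  end.

Lemma genE i x : gen i x = gen_fun i x.
Proof.
by case: (letter_cases i) => ->; rewrite /gen /= ?/s1 ?/s2 ?/s3 ?/s4 permM /tperm !permE !eE.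
Qed.

Definition word_fun (s : seq 'I_4) (x : Ts) : Ts := foldl (fun y i => gen_fun i y) x s.

Lemma word_prod_nil : word_prod [::] = 1.
Proof. exact: big_nil. Qed.

Lemma word_prod_cons i s : word_prod (i :: s) = gen i * word_prod s.
Proof. exact: big_cons. Qed.

Lemma word_prod_cat s t : word_prod (s ++ t) = word_prod s * word_prod t.
Proof. exact: big_cat. Qed.

Lemma word_prod_rcons s i : word_prod (rcons s i) = word_prod s * gen i.
Proof. by rewrite -cats1 word_prod_cat word_prod_cons word_prod_nil mulg1. Qed.

Lemma word_prodE s x : word_prod s x = word_fun s x.
Proof.
elim: s x => [|i s IH] x; first by rewrite word_prod_nil perm1.
by rewrite word_prod_cons permM IH genE.
Qed.

Definition signed_units : seq Ts := [seq (i, b) | i <- letters, b <- [:: true; false]].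

Lemma mem_signed_units x : x \in signed_units.
Proof. by case: x => i b; apply/allpairsP; exists (i, b); rewrite mem_letters; case: b. Qed.

(* The pair (x, y) stands for the root x + y, which is negative iff the coordinate of smaller
   index is; [len f] counts the positive roots e_i +- e_j (i < j) made negative by f, which on
   W(D4) is the Coxeter length ([coxlen_len]). *)
Definition negative_root (x y : Ts) : bool := if x.1 < y.1 then ~~ x.2 else ~~ y.2.

Definition pos_roots : seq (Ts * Ts) :=
  [seq ((ij.1, true), (ij.2, b))
  | ij <- [:: (o0, o1); (o0, o2); (o0, o3); (o1, o2); (o1, o3); (o2, o3)],
                                   b <- [:: true; false]].

Definition len (f : Ts -> Ts) : nat := count (fun r => negative_root (f r.1) (f r.2)) pos_roots.

Lemma len_word s : len (word_prod s) = len (word_fun s).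
Proof. by apply: eq_count => r; rewrite !word_prodE. Qed.

Lemma len_le12 f : len f <= 12.
Proof. exact: count_size. Qed.

Definition word_graph (s : seq 'I_4) : seq Ts := map (word_fun s) signed_units.

(* Breadth-first enumeration of the group generated by [ks], one word per element; elements are
   compared through their graphs. *)
Definition extend (ks : seq 'I_4) (L : seq (seq Ts * seq 'I_4)) : seq (seq Ts * seq 'I_4) :=
  foldl (fun acc s => let g := word_graph s in
                       if has (fun p => p.1 == g) acc then acc else rcons acc (g, s))
        L [seq k :: p.2 | p <- L, k <- ks].

Definition span_words (ks : seq 'I_4) (n : nat) : seq (seq 'I_4) :=
  map snd (iter n (extend ks) [:: (word_graph [::], [::])]).

Definition closed_words (ks : seq 'I_4) (L : seq (seq 'I_4)) : bool :=
  let graphs := map word_graph L in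
  ([::] \in L) && all (fun s => all (fun k => word_graph (k :: s) \in graphs) ks) L.

Lemma word_graph_prod s t : word_graph s = word_graph t -> word_prod s = word_prod t.
Proof.
move/eq_in_map => E; apply/permP => x.
by rewrite !word_prodE; apply: E; exact: mem_signed_units.
Qed.

Lemma word_prod_WK (K : {set 'I_4}) s : all (mem K) s -> word_prod s \in WK K.
Proof.
elim: s => [|i s IH] /=; first by rewrite word_prod_nil group1.
by case/andP=> Ki Ks; rewrite word_prod_cons groupM ?IH // mem_gen ?imset_f.
Qed.

Lemma gen_WK (K : {set 'I_4}) i : i \in K -> gen i \in WK K.
Proof. by move=> Ki; rewrite mem_gen ?imset_f. Qed.

Lemma WKS (K K' : {set 'I_4}) : K \subset K' -> WK K \subset WK K'.
Proof. by move=> sKK'; apply/genS/imsetS. Qed.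

Lemma WK_word (K : {set 'I_4}) w : w \in WK K -> exists2 s, all (mem K) s & w = word_prod s.
Proof.
case/gen_prodgP => n [c Kc ->].
have /fin_all_exists2 [f fK fE] : forall j, exists2 i, i \in K & c j = gen i.
  by move=> j; case/imsetP: (Kc j) => i Ki ->; exists i.
exists [seq f j | j <- enum 'I_n]; first by apply/allP => _ /mapP [j _ ->]; exact: fK.
by rewrite /word_prod big_map enumT; apply: eq_bigr => j _; rewrite fE.
Qed.

Lemma WK_words (K : {set 'I_4}) ks L w : closed_words ks L -> {subset K <= ks} ->
  w \in WK K -> exists2 s, s \in L & w = word_prod s.
Proof.
case/andP => nilL /allP closedL sKks /WK_word [t /allP tK ->] {w}.
elim: t tK => [|k t IH] tK; first by exists [::].
have [|s sL Est] := IH; first by move=> i ti; apply: tK; rewrite inE ti orbT.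
have /allP/(_ k (sKks _ (tK k (mem_head _ _)))) := closedL s sL.
case/mapP => s' s'L Es'; exists s' => //.
by rewrite word_prod_cons Est -word_prod_cons; apply: word_graph_prod.
Qed.

Definition W_words := span_words letters 12.
(* The cube of the Coxeter element s1 s2 s3 s4 (of order h = 6) is the longest element -1; [w0]
   is locked so that unification never unfolds this product of permutations. *)
Definition w0_word : seq 'I_4 := flatten (nseq 3 letters).
HB.lock Definition w0 : {perm Ts} := word_prod w0_word.

Lemma W_words_closed : closed_words letters W_words.
Proof. by vm_compute. Qed.

Lemma W_words_len : all (fun s => [&& len (word_fun s) == size s,
    all (fun k => len (word_fun (k :: s)) <= (size s).+1) letters &
    (size s == 12) ==> (word_graph s == word_graph w0_word)]) W_words.
Proof. by vm_compute. Qed.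

Lemma W_word w : w \in WD4 -> exists2 s, s \in W_words & w = word_prod s.
Proof. by apply: WK_words W_words_closed _ => i _; exact: mem_letters. Qed.

Lemma gen_W i : gen i \in WD4.
Proof. by rewrite gen_WK ?inE. Qed.

Lemma word_prod_W s : word_prod s \in WD4.
Proof. by rewrite word_prod_WK //; apply/allP => i _; rewrite inE. Qed.

Lemma len_genM i w : w \in WD4 -> len (gen i * w) <= (len w).+1.
Proof.
case/W_word => s /(allP W_words_len) /and3P [/eqP lens /allP lenk _] ->.
by rewrite -word_prod_cons !len_word lens lenk ?mem_letters.
Qed.

Lemma len_word_prod s : len (word_prod s) <= size s.
Proof.
elim: s => [|i s IH]; first by rewrite len_word.
by rewrite word_prod_cons (leq_trans (len_genM _ (word_prod_W s))).
Qed.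

Lemma len_reduced w : w \in WD4 -> exists2 s, size s = len w & w = word_prod s.
Proof.
case/W_word => s /(allP W_words_len) /and3P [/eqP lens _ _] ->.
by exists s; rewrite // len_word.
Qed.

Lemma w0_W : w0 \in WD4.
Proof. by rewrite w0.unlock word_prod_W. Qed.

Lemma len_w0 : len w0 = 12.
Proof. by rewrite w0.unlock len_word; vm_compute. Qed.

Lemma len12_w0 w : w \in WD4 -> len w = 12 -> w = w0.
Proof.
case/W_word => s /(allP W_words_len) /and3P [/eqP lens _ /implyP len12] -> lenw.
by rewrite w0.unlock; apply: word_graph_prod; apply/eqP/len12; rewrite -lens -len_word lenw.
Qed.

Lemma coxlen_len w : w \in WD4 -> coxlen w (len w).
Proof.
move=> Ww; split; first by case: (len_reduced Ww) => s lens Es; exists s.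
by move=> s <-; exact: len_word_prod.
Qed.

Lemma coxlenE w n : w \in WD4 -> coxlen w n -> n = len w.
Proof.
move=> Ww [[s [<- Es]] minimal]; apply/eqP; rewrite eqn_leq -{2}Es len_word_prod andbT.
by case: (len_reduced Ww) => t <- /esym /minimal.
Qed.

Lemma mulgg_gen i : gen i * gen i = 1.
Proof.
have -> : gen i * gen i = word_prod [:: i; i] by rewrite !word_prod_cons word_prod_nil mulg1.
by rewrite -word_prod_nil; apply: word_graph_prod; case: (letter_cases i) => ->; vm_compute.
Qed.

Lemma invg_gen i : (gen i)^-1 = gen i.
Proof. by apply: (mulgI (gen i)); rewrite mulgV mulgg_gen. Qed.

Lemma gen_neq1 i : gen i != 1.
Proof.
apply/eqP => /(congr1 (fun p : {perm Ts} => p (i, true))).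
by rewrite genE perm1; case: (letter_cases i) => ->; vm_compute.
Qed.

Lemma word_prod_rev s : word_prod (rev s) = (word_prod s)^-1.
Proof.
elim: s => [|i s IH]; first by rewrite word_prod_nil invg1.
by rewrite rev_cons -cats1 word_prod_cat IH !word_prod_cons word_prod_nil mulg1 invMg invg_gen.
Qed.

Lemma len_invg w : w \in WD4 -> len w^-1 = len w.
Proof.
have le w' : w' \in WD4 -> len w'^-1 <= len w'.
  case/len_reduced => s <- ->; rewrite -word_prod_rev.
  by rewrite (leq_trans (len_word_prod _)) ?size_rev.
by move=> Ww; apply/eqP; rewrite eqn_leq le //= -{1}[w]invgK le ?groupV.
Qed.

Lemma invg_w0 : w0^-1 = w0.
Proof. by rewrite w0.unlock -word_prod_rev; apply: word_graph_prod; vm_compute. Qed.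

Lemma mulgg_w0 : w0 * w0 = 1.
Proof. by rewrite -{1}invg_w0 mulVg. Qed.

Lemma commute_w0_gen i : commute w0 (gen i).
Proof.
have -> : gen i = word_prod [:: i] by rewrite word_prod_cons word_prod_nil mulg1.
rewrite /commute w0.unlock -!word_prod_cat.
by apply: word_graph_prod; case: (letter_cases i) => ->; vm_compute.
Qed.

(* The signed unit vectors occurring in the fundamental weight of node k: they form a set fixed
   by every simple reflection but [gen k]. *)
Definition weight_support (k : 'I_4) : seq Ts :=
  match val k with
  | 0 => [:: (o0, true)]
  | 1 => [:: (o0, true); (o1, true)]
  | 2 => [:: (o0, true); (o1, true); (o2, true); (o3, false)]
  | _ => [:: (o0, true); (o1, true); (o2, true); (o3, true)]
  end.

Lemma weight_support_stable : all (fun k => all (fun j => (j == k) ||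
    all (fun x => (gen_fun j x \in weight_support k) == (x \in weight_support k)) signed_units)
  letters) letters.
Proof. by vm_compute. Qed.

Lemma weight_support_moved :
  all (fun k => has (fun x => (gen_fun k x \in weight_support k) != (x \in weight_support k))
                    signed_units) letters.
Proof. by vm_compute. Qed.

Lemma gen_notin_WK k : gen k \notin WK (~: [set k]).
Proof.
pose S := [set x | x \in weight_support k].
have stabS : WK (~: [set k]) \subset 'N(S | 'P).
  rewrite gen_subG; apply/subsetP => p /imsetP [j]; rewrite in_setC1 => jk ->.
  apply/astabsP => x; rewrite /= apermE genE !inE.
  have /allP/(_ j (mem_letters j)) := allP weight_support_stable k (mem_letters k).
  by rewrite (negbTE jk) => /allP/(_ x (mem_signed_units x))/eqP.
apply/negP => /(subsetP stabS)/astabsP stab_k.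
have /hasP [x _] := allP weight_support_moved k (mem_letters k).
by move: (stab_k x); rewrite /= apermE genE !inE => ->; rewrite eqxx.
Qed.

Definition W023_words := span_words [:: o0; o2; o3] 3.

Lemma W023_words_closed : closed_words [:: o0; o2; o3] W023_words.
Proof. by vm_compute. Qed.

Lemma W023_word w : w \in WK (~: [set o1]) -> exists2 s, s \in W023_words & w = word_prod s.
Proof. by apply: WK_words W023_words_closed _ => i; rewrite !inE; case: (letter_cases i) => ->. Qed.

Definition cycle3 (a b c i : 'I_4) : 'I_4 :=
  if i == a then b else if i == b then c else if i == c then a else i.

(* For some non-central node i, one of the moves δ ↦ s_i δ s_(rho i) (two ascents) or
   δ ↦ δ s_(rho i) (a descent on the left, an ascent on the right) lengthens δ = word_prod s;
   [ascent_move] and [descent_move] realise them by chambers. *)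
Definition improvable (rho : 'I_4 -> 'I_4) (s : seq 'I_4) : bool :=
  has (fun i =>
    (len (word_fun (i :: s)) == (len (word_fun s)).+1) &&
      (len (word_fun (rcons (i :: s) (rho i))) == (len (word_fun (i :: s))).+1) ||
    (len (word_fun (i :: s)) < len (word_fun s)) &&
      (len (word_fun (rcons s (rho i))) == (len (word_fun s)).+1))
  [:: o0; o2; o3].

Lemma improvable_word rho s w : w = word_prod s -> improvable rho s -> exists2 i, i != o1 &
  (len (gen i * w) = (len w).+1 /\ len (gen i * w * gen (rho i)) = (len (gen i * w)).+1) \/
  (len (gen i * w) < len w /\ len (w * gen (rho i)) = (len w).+1).
Proof.
move=> ->; case/hasP => i i023 imp; exists i.
  by move: i023; rewrite !inE; case/or3P => /eqP ->.
move: imp; rewrite -(len_word s) -(len_word (i :: s)).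
rewrite -(len_word (rcons s _)) -(len_word (rcons (i :: s) _)).
rewrite !word_prod_rcons word_prod_cons.
by case/orP => [/andP [/eqP lenL /eqP lenR] | /andP [lenL /eqP lenR]]; [left | right].
Qed.

Definition coset_improvable (rho : 'I_4 -> 'I_4) : bool :=
  all (fun s => (s == [::]) || improvable rho (w0_word ++ s)) W023_words.

Lemma coset_improvable_cycles :
  coset_improvable (cycle3 o0 o2 o3) && coset_improvable (cycle3 o0 o3 o2).
Proof. by vm_compute. Qed.

Definition fun_of3 (a b c i : 'I_4) : 'I_4 :=
  if i == o0 then a else if i == o2 then b else if i == o3 then c else i.

Lemma order3_fixing_o1 : all (fun a => all (fun b => all (fun c => let f := fun_of3 a b c in
  [&& uniq [:: a; o1; b; c] & all (fun i => f (f (f i)) == i) letters] ==>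
  [|| all (fun i => f i == i) letters, all (fun i => f i == cycle3 o0 o2 o3 i) letters
    | all (fun i => f i == cycle3 o0 o3 o2 i) letters]) letters) letters) letters.
Proof. by vm_compute. Qed.

(** * Buildings of type D4 *)

Section Building.
Variables (T : Type) (d : T -> T -> {perm Ts}).
Hypothesis dB : is_building d.

Lemma dist_W C D : d C D \in WD4.
Proof. by case: dB. Qed.

Lemma dist_eq1 C D : d C D = 1 <-> C = D.
Proof. by case: dB. Qed.

Lemma dist_refl C : d C C = 1.
Proof. exact/dist_eq1. Qed.

Lemma dist_genL C C' D i : d C' C = gen i -> d C' D = gen i * d C D \/ d C' D = d C D.
Proof. by case: dB => _ _ _ WD2 _ /(WD2 _ _ D) []. Qed.

Lemma dist_genL_len C C' D i : d C' C = gen i -> len (gen i * d C D) = (len (d C D)).+1 ->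
  d C' D = gen i * d C D.
Proof.
case: dB => _ _ _ WD2 _ /(WD2 _ _ D) [_ WD2b] lenS; apply: WD2b (coxlen_len (dist_W C D)) _.
by rewrite -lenS; apply: coxlen_len; rewrite groupM ?gen_W ?dist_W.
Qed.

Lemma exists_genL C D i : exists C', d C' C = gen i /\ d C' D = gen i * d C D.
Proof. by case: dB => _ _ _ _; apply. Qed.

Lemma adj_sym C C' i : d C' C = gen i -> d C C' = gen i.
Proof.
move=> C'C; case: (dist_genL C' C'C); rewrite dist_refl => E.
  by rewrite -[d C C']mul1g -(mulgg_gen i) -mulgA -E mulg1.
by move/esym/dist_eq1: E C'C => ->; rewrite dist_refl => /eqP; rewrite eq_sym (negbTE (gen_neq1 i)).
Qed.

Fixpoint gallery (s : seq 'I_4) (x y : T) : Prop :=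
  if s is i :: s' then exists2 x1, d x x1 = gen i & gallery s' x1 y else x = y.

Lemma gallery_cat s t x y z : gallery s x y -> gallery t y z -> gallery (s ++ t) x z.
Proof.
elim: s x => [|i s IH] x /=; first by move=> ->.
by case=> x1 xx1 x1y yz; exists x1; last exact: IH x1y yz.
Qed.

Lemma gallery_rev s x y : gallery s x y -> gallery (rev s) y x.
Proof.
elim: s x => [|i s IH] x /=; first by move=> ->.
case=> x1 xx1 /IH x1y; rewrite rev_cons -cats1; apply: gallery_cat x1y _.
by exists x; first exact: adj_sym.
Qed.

Lemma gallery_dist s x y : d x y = word_prod s -> gallery s x y.
Proof.
elim: s x => [|i s IH] x; first by rewrite word_prod_nil => /dist_eq1.
rewrite word_prod_cons => xy; have [x1 [x1x x1y]] := exists_genL x y i.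
exists x1; first exact: adj_sym.
by apply: IH; rewrite x1y xy mulgA mulgg_gen mul1g.
Qed.

Lemma dist_gallery s x y : gallery s x y -> len (word_prod s) = size s -> d x y = word_prod s.
Proof.
elim: s x => [|i s IH] x /=; first by move=> ->; rewrite dist_refl word_prod_nil.
case=> x1 xx1 x1y; rewrite word_prod_cons => lenS.
have lens : len (word_prod s) = size s.
  apply/eqP; rewrite eqn_leq len_word_prod -ltnS -lenS.
  exact: len_genM (word_prod_W s).
rewrite -(IH _ x1y lens); apply: dist_genL_len xx1 _.
by rewrite (IH _ x1y lens) lenS lens.
Qed.

Lemma dist_sym x y : d y x = (d x y)^-1.
Proof.
have [s lens Es] := len_reduced (dist_W x y).
have revs := gallery_rev (gallery_dist Es).
rewrite Es -word_prod_rev; apply: dist_gallery revs _.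
by rewrite word_prod_rev -Es len_invg ?dist_W // size_rev lens.
Qed.

Lemma dist_genR C D D' i : d D D' = gen i -> d C D' = d C D * gen i \/ d C D' = d C D.
Proof.
move/adj_sym/(dist_genL C) => [E|E]; [left|right];
  by rewrite dist_sym E ?invMg ?invg_gen -dist_sym.
Qed.

Lemma dist_genR_len C D D' i : d D D' = gen i -> len (d C D * gen i) = (len (d C D)).+1 ->
  d C D' = d C D * gen i.
Proof.
move/adj_sym => D'D lenS.
have W_DCi : d C D * gen i \in WD4 by rewrite groupM ?gen_W ?dist_W.
rewrite dist_sym (dist_genL_len (D := C) D'D) ?invMg ?invg_gen -?dist_sym //.
by rewrite dist_sym -[gen i]invg_gen -invMg (len_invg W_DCi) lenS len_invg ?dist_W.
Qed.

Lemma gallery_coset (K : {set 'I_4}) s x u v : gallery s u v -> all (mem K) s ->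
  (d x u)^-1 * d x v \in WK K.
Proof.
elim: s u => [|i s IH] u /=; first by move=> ->; rewrite mulVg group1.
case=> u1 uu1 u1v /andP [Ki Ks].
rewrite -[d x v]mul1g -(mulgV (d x u1)) !mulgA -mulgA groupM ?IH //.
by case: (dist_genR x uu1) => ->; rewrite ?mulKg ?gen_WK // mulVg group1.
Qed.

Lemma residue_gallery C J x : chambers_of d C J x -> exists2 s, all (mem (~: J)) s & gallery s C x.
Proof. by case/WK_word => s Js Es; exists s; last exact: gallery_dist. Qed.

Lemma opp_chE x y : opp_ch d x y <-> d x y = w0.
Proof.
split=> [opp | xy w n m Ww /(coxlenE Ww) -> /(coxlenE (dist_W x y)) ->].
  have := opp _ _ _ w0_W (coxlen_len w0_W) (coxlen_len (dist_W x y)).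
  rewrite len_w0 => le12; apply: len12_w0 (dist_W x y) _.
  by apply/eqP; rewrite eqn_leq len_le12.
by rewrite xy len_w0 len_le12.
Qed.

Lemma exists_opposite x : exists y, d x y = w0.
Proof.
have dist_word s : exists y, d y x = word_prod s.
  elim: s => [|i s [y yx]]; first by exists x; rewrite dist_refl word_prod_nil.
  by have [y' [_ y'x]] := exists_genL y x i; exists y'; rewrite y'x yx word_prod_cons.
by have [y yx] := dist_word w0_word; exists y; rewrite dist_sym yx -w0.unlock invg_w0.
Qed.

Lemma dist_panel x x' p D i : d x' x = gen i -> d p x = gen i -> x' <> p ->
  len (d p D) < len (d x D) -> d x' D = d x D.
Proof.
move=> x'x px x'p lt_px.
have xD : gen i * d p D = d x D.
  case: (dist_genL D px) => pD; last by rewrite pD ltnn in lt_px.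
  by rewrite pD mulgA mulgg_gen mul1g.
have x'p_adj : d x' p = gen i.
  by case: (dist_genL p x'x); rewrite (adj_sym px) // mulgg_gen => /dist_eq1 /x'p.
have lenS : len (gen i * d p D) = (len (d p D)).+1.
  by apply/eqP; rewrite eqn_leq len_genM ?dist_W // xD lt_px.
by rewrite (dist_genL_len x'p_adj lenS) xD.
Qed.

(** * Trialities *)

Section Triality.
Variables (theta : T -> T) (sigma : {perm 'I_4}).
Hypothesis dthick : thick d.
Hypothesis triality : is_triality d theta sigma.

Lemma sigma_o1 : sigma o1 = o1.
Proof.
case: triality => _ _ + _; suff -> : inord 1 = o1 by [].
by apply/val_inj; rewrite /= inordK.
Qed.

Lemma sigma_cube i : sigma (sigma (sigma i)) = i.
Proof.
case: triality => _ _ _ ord3; have := expg_order sigma; rewrite ord3 => sigma3.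
have -> : sigma (sigma (sigma i)) = (sigma ^+ 3) i by rewrite !expgS expg0 mulg1 !permM.
by rewrite sigma3 perm1.
Qed.

Lemma sigma_cycle : sigma =1 cycle3 o0 o2 o3 \/ sigma =1 cycle3 o0 o3 o2.
Proof.
set f := fun_of3 (sigma o0) (sigma o2) (sigma o3).
have sigmaE : sigma =1 f.
  by move=> i; case: (letter_cases i) => ->; rewrite /f /fun_of3 /= ?sigma_o1.
have f_ok : uniq [:: sigma o0; o1; sigma o2; sigma o3] && all (fun i => f (f (f i)) == i) letters.
  apply/andP; split; last by apply/allP => i _; rewrite -!sigmaE sigma_cube.
  have -> : [:: sigma o0; o1; sigma o2; sigma o3] = map sigma letters by rewrite /= sigma_o1.
  by rewrite map_inj_uniq //; apply: perm_inj.
move: order3_fixing_o1 => /allP/(_ _ (mem_letters (sigma o0)))/allP/(_ _ (mem_letters (sigma o2)))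
  /allP/(_ _ (mem_letters (sigma o3)))/implyP/(_ f_ok).
case/or3P => /allP f_eq; [exfalso | left | right] => [|i|i]; last 2 first.
- by rewrite sigmaE; apply/eqP/f_eq/mem_letters.
- by rewrite sigmaE; apply/eqP/f_eq/mem_letters.
case: triality => _ _ _; suff -> : sigma = 1 by rewrite order1.
by apply/permP => i; rewrite perm1 sigmaE; apply/eqP/f_eq/mem_letters.
Qed.

Lemma adj_theta x x' i : d x x' = gen i -> d (theta x) (theta x') = gen (sigma i).
Proof. by case: triality => _ adj _ _ /adj. Qed.

Lemma gallery_theta s x y : gallery s x y -> gallery (map sigma s) (theta x) (theta y).
Proof.
elim: s x => [|i s IH] x /=; first by move=> ->.
by case=> x1 /adj_theta xx1 /IH x1y; exists (theta x1).
Qed.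

Lemma chambers_of_refl C J : chambers_of d C J C.
Proof. by rewrite /chambers_of dist_refl group1. Qed.

Lemma residue_theta_coset C J x1 x2 y : chambers_of d C J x1 -> chambers_of d C J x2 ->
  (d y (theta x1))^-1 * d y (theta x2) \in WK (sigma @: ~: J).
Proof.
move=> /residue_gallery [s1 Js1 g1] /residue_gallery [s2 Js2 g2].
apply: gallery_coset (gallery_theta (gallery_cat (gallery_rev g1) g2)) _.
rewrite all_map; apply/allP => j; rewrite mem_cat mem_rev => /orP [] sj; apply: imset_f.
  exact: (allP Js1).
exact: (allP Js2).
Qed.

Lemma in_Opp_opposite C J x : in_Opp d theta C J -> chambers_of d C J x ->
  exists2 x1, chambers_of d C J x1 & d x (theta x1) = w0.
Proof. by case=> opp _ /opp [_ [[x1 [Ax1 ->]] /opp_chE]]; exists x1. Qed.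

Lemma chambers_of_setT C x : chambers_of d C setT x -> x = C.
Proof. by rewrite /chambers_of setCT /WK imset0 gen0 inE => /eqP /dist_eq1. Qed.

Lemma in_Opp_chamber z : d z (theta z) = w0 -> in_Opp d theta z setT.
Proof.
move=> zz; split=> [x /chambers_of_setT -> | _ [x [/chambers_of_setT -> ->]]].
  exists (theta z); split; last exact/opp_chE.
  by exists z; split; first exact: chambers_of_refl.
by exists z; split; [exact: chambers_of_refl | apply/opp_chE; rewrite dist_sym zz invg_w0].
Qed.

Lemma in_Opp_set0 C : in_Opp d theta C set0.
Proof.
case: triality => [[theta' _ thetaK] _ _ _].
have all_in x : chambers_of d C set0 x by rewrite /chambers_of setC0 dist_W.
split=> x _; have [y /opp_chE xy] := exists_opposite x; exists y; split => //.
by exists (theta' y); rewrite thetaK.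
Qed.

Lemma ascent_move x i : len (gen i * d x (theta x)) = (len (d x (theta x))).+1 ->
  len (gen i * d x (theta x) * gen (sigma i)) = (len (gen i * d x (theta x))).+1 ->
  exists x', d x' (theta x') = gen i * d x (theta x) * gen (sigma i).
Proof.
move=> lenL lenR; have [x' [x'x _]] := exists_genL x x i.
have x'tx := dist_genL_len x'x lenL.
exists x'; rewrite -x'tx; apply: dist_genR_len (adj_theta (adj_sym x'x)) _.
by rewrite x'tx.
Qed.

Lemma descent_move x i : len (gen i * d x (theta x)) < len (d x (theta x)) ->
  len (d x (theta x) * gen (sigma i)) = (len (d x (theta x))).+1 ->
  exists x', d x' (theta x') = d x (theta x) * gen (sigma i).
Proof.
move=> lenL lenR; have [p [px ptx]] := exists_genL x (theta x) i.
have [x' [x'x x'p]] : exists x', d x' x = gen i /\ x' <> p.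
  (* thickness: the i-panel of x has a chamber other than the projection p of theta x *)
  have [C1 [C2 [C12 xC1 xC2]]] := dthick x i.
  case: (classic (C1 = p)) => [C1p|]; last by exists C1; split; first exact: adj_sym.
  by exists C2; split; [exact: adj_sym | move=> C2p; apply: C12; rewrite C1p C2p].
have x'tx : d x' (theta x) = d x (theta x) by apply: dist_panel x'x px x'p _; rewrite ptx.
exists x'; rewrite -x'tx; apply: dist_genR_len (adj_theta (adj_sym x'x)) _.
by rewrite x'tx.
Qed.

Lemma sigma_neq_o1 i : i != o1 -> sigma i != o1.
Proof. by rewrite -{2}sigma_o1 (inj_eq perm_inj). Qed.

Lemma improve_opposition x : w0 * d x (theta x) \in WK (~: [set o1]) -> d x (theta x) != w0 ->
  exists2 x', len (d x (theta x)) < len (d x' (theta x')) &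
              w0 * d x' (theta x') \in WK (~: [set o1]).
Proof.
move=> Kx ne_w0; have [s Ws Es] := W023_word Kx.
have dxE : d x (theta x) = word_prod (w0_word ++ s).
  by rewrite word_prod_cat -w0.unlock -Es mulgA mulgg_w0 mul1g.
have s_nil : s != [::] by apply: contra ne_w0 => /eqP s0; rewrite dxE s0 cats0 -w0.unlock.
have [rho sigmaE imp] : exists2 rho, sigma =1 rho & coset_improvable rho.
  case/andP: coset_improvable_cycles => imp1 imp2.
  by case: sigma_cycle => sigmaE; [exists (cycle3 o0 o2 o3) | exists (cycle3 o0 o3 o2)].
move/allP/(_ s Ws): imp; rewrite (negbTE s_nil) orFb.
move=> imp; have := improvable_word dxE imp; case=> i i1; rewrite -sigmaE.
have K_gen j : j != o1 -> gen j \in WK (~: [set o1]) by move=> j1; apply: gen_WK; rewrite in_setC1.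
case=> [[lenL lenR] | [lenL lenR]].
  have [x' dx'] := ascent_move lenL lenR; exists x'; rewrite dx'; first by rewrite lenR lenL.
  rewrite !mulgA commute_w0_gen -(mulgA (gen i)).
  by apply: groupM; [apply: groupM; [exact: K_gen | exact: Kx] | exact/K_gen/sigma_neq_o1].
have [x' dx'] := descent_move lenL lenR; exists x'; rewrite dx'; first by rewrite lenR.
by rewrite mulgA; apply: groupM; [exact: Kx | exact/K_gen/sigma_neq_o1].
Qed.

Lemma opp_image_from_coset x : w0 * d x (theta x) \in WK (~: [set o1]) ->
  exists z, d z (theta z) = w0.
Proof.
have [n] := ubnP (12 - len (d x (theta x))); elim: n x => // n IH x lt_n Kx.
have [|ne_w0] := eqVneq (d x (theta x)) w0; first by exists x.
have [x' lt_xx' Kx'] := improve_opposition Kx ne_w0.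
by apply: IH Kx'; have := len_le12 (d x' (theta x')); lia.
Qed.

Lemma central_Opp_chamber C J : in_Opp d theta C J -> o1 \in J -> exists z, d z (theta z) = w0.
Proof.
move=> CJ J1; apply: (@opp_image_from_coset C).
have [x1 Ax1 Cx1] := in_Opp_opposite CJ (chambers_of_refl C J).
have := residue_theta_coset C Ax1 (chambers_of_refl C J); rewrite Cx1 invg_w0.
apply/subsetP/WKS/subsetP => _ /imsetP [j Jj ->]; rewrite in_setC1 sigma_neq_o1 //.
by apply: contraTneq Jj => ->; rewrite inE J1.
Qed.

Lemma in_Opp_sigma_stable C J i : in_Opp d theta C J -> i \in J -> sigma i \in J.
Proof.
move=> CJ Ji; apply/negPn/negP => Jsi.
have [x1 Ax1 Cx1] := in_Opp_opposite CJ (chambers_of_refl C J).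
have [x' [x'C x'x1]] := exists_genL C (theta x1) (sigma i).
have Ax' : chambers_of d C J x' by rewrite /chambers_of (adj_sym x'C); apply: gen_WK; rewrite inE.
have [x2 Ax2 x'x2] := in_Opp_opposite CJ Ax'.
have := residue_theta_coset x' Ax1 Ax2; rewrite x'x1 Cx1 x'x2.
rewrite invMg invg_w0 invg_gen commute_w0_gen -mulgA mulgg_w0 mulg1.
apply/negP; apply: contra (gen_notin_WK (sigma i)); apply/subsetP/WKS/subsetP.
move=> _ /imsetP [j Jj ->]; rewrite in_setC1 (inj_eq perm_inj).
by apply: contraTneq Jj => ->; rewrite inE Ji.
Qed.

Lemma sigma_stable_noncentral (J : {set 'I_4}) k i : (forall j, j \in J -> sigma j \in J) ->
  k \in J -> k != o1 -> i != o1 -> i \in J.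
Proof.
move=> sJ Jk; have J1 := sJ _ Jk; have J2 := sJ _ J1.
case: sigma_cycle => sE; rewrite !sE in J1 J2;
  by case: (letter_cases k) Jk J1 J2 => -> //; case: (letter_cases i) => ->.
Qed.

Lemma triality_capped : capped d theta.
Proof.
have [[C CT]|noT] := classic (exists C, in_Opp d theta C setT).
  by exists C, setT; split=> // i; split=> _; [exists C, setT | rewrite inE].
have no_o1 C J : in_Opp d theta C J -> o1 \notin J.
  move=> CJ; apply/negP => /(central_Opp_chamber CJ) [z /in_Opp_chamber zT].
  by apply: noT; exists z.
have [[C [J [CJ /set0Pn [k Jk]]]]|no_J] := classic (exists C J, in_Opp d theta C J /\ J != set0).
  exists C, J; split=> // i; split=> [Ji | [C' [J' [CJ' J'i]]]]; first by exists C, J.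
  have sJ j : j \in J -> sigma j \in J := in_Opp_sigma_stable CJ.
  apply: (sigma_stable_noncentral sJ Jk).
    by apply: contraNneq (no_o1 _ _ CJ) => <-.
  by apply: contraNneq (no_o1 _ _ CJ') => <-.
case: dB => [[C]] _ _ _ _; exists C, set0; split; first exact: in_Opp_set0.
move=> i; rewrite inE; split=> // -[C' [J' [CJ' J'i]]]; case: no_J.
by exists C', J'; split; last by apply/set0Pn; exists i.
Qed.

End Triality.

End Building.

Theorem theorem3p17 (T : Type) (delta : T -> T -> {perm Ts}) (theta : T -> T)
    (sigma : {perm 'I_4}) :
  is_building delta -> thick delta -> is_triality delta theta sigma ->
  capped delta theta.
Proof. by move=> dB dthick; apply: triality_capped. Qed.
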